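(* Let $\Phi$ be a root system of affine type and $c$ a Coxeter element. A root $\alpha\in\Phi_c\setminus\{\delta\}$ is $c$-compatible with $\delta$ (i.e. $(\alpha\|\delta)_c=0$) if and only if $\alpha\in\Upsilon^{\mathrm{re}}_c$.
   Context: $A=[a_{ij}]$ is an $n\times n$ symmetrizable Cartan matrix of affine type with symmetrizing constants $d_i$; $V$ has basis of simple roots $\Pi=\{\alpha_1,\dots,\alpha_n\}$, co-roots $\alpha_i^\vee=d_i^{-1}\alpha_i$, symmetric form $K(\alpha_i^\vee,\alpha_j)=a_{ij}$, reflections $s_i(v)=v-K(\alpha_i^\vee,v)\alpha_i$. $\Phi$ is the root system, $\Phi^+$ the positive roots; $[v:\alpha_i]$, $[v:\alpha_i^\vee]$ coordinates in root and co-root bases; $[x]_+=\max(x,0)$; $\beta^\vee=\frac2{K(\beta,\beta)}\beta$ for real roots, $(-\alpha_i)^\vee=-\alpha_i^\vee$; $\delta$ is the positive imaginary root closest to $0$ and $\delta^\vee$ the positive imaginary root closest to $0$ of the dual root system (Cartan matrix $A^T$). The Coxeter element is indexed $c=s_1\cdots s_n$. With $\alpha_{\mathrm{aff}}$ the affine simple root, $V_{\mathrm{fin}}$ the span of the others, $\Phi_{\mathrm{fin}}=\Phi\cap V_{\mathrm{fin}}$: $\gamma_c\in V_{\mathrm{fin}}$ unique with $c\gamma_c=\gamma_c+\delta$, $U_c=\{v:K(\gamma_c,v)=0\}$, $\Upsilon_c=\Phi\cap U_c$, $\Upsilon^{\mathrm{re}}_c$ the positive real roots in $U_c$ whose $c$-orbit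 contains a root of $\Phi_{\mathrm{fin}}$, $\Phi_c=-\Pi\cup(\Phi^+\setminus U_c)\cup\Upsilon^{\mathrm{re}}_c\cup\{\delta\}$. Real roots of $\Upsilon_c$ form a root system with irreducible components of affine type A; $\Pi_c$ is the unique minimal subset of $\Upsilon_c\cap\Phi^+$ whose nonnegative span contains $\Upsilon_c\cap\Phi^+$. Tube support $\mathrm{Supp}_{\Pi_c}(\beta)$: elements of $\Pi_c$ with nonzero coefficient in the unique expansion of $\beta$ in simple roots of its component; union for sets; component-full: containing all simple roots of some component. $\mathrm{adj}(\alpha,\beta)$ counts elements $\beta_j$ of $\mathrm{Supp}_{\Pi_c}(\beta)$ with $\beta_j\in\mathrm{Supp}_{\Pi_c}(c\alpha)\cup\mathrm{Supp}_{\Pi_c}(c^{-1}\alpha)$ and $\beta_j\notin\mathrm{Supp}_{\Pi_c}(\alpha)$. $(\alpha\|\beta)_c^{\to}=-\sum_{i}[\alpha^\vee:\alpha_i^\vee][\beta:\alpha_i]-\sum_{j<i}a_{ij}[\alpha^\vee:\alpha_i^\vee]_+[\beta:\alpha_j]_+$, $(\alpha\|\beta)_c^{\leftarrow}=-\sum_{i}[\alpha^\vee:\alpha_i^\vee][\beta:\alpha_i]-\sum_{i<j}a_{ij}[\alpha^\vee:\alpha_i^\vee]_+[\beta:\alpha_j]_+$; $(\alpha\|\beta)_c=\mathrm{adj}(\alpha,\beta)$ if $\alpha,\beta\in\Upsilon^{\mathrm{re}}_c$ and $\{\alpha,\beta\}$ is component-full, otherwise the maximum of these two. Distinct roots are $c$-compatible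 when their compatibility degree is $0$. *)

From HB Require Import structures.
From mathcomp Require Import all_boot all_order all_algebra.
Set Implicit Arguments. Unset Strict Implicit. Unset Printing Implicit Defensive.
Import Order.TTheory GRing.Theory Num.Theory.
Local Open Scope ring_scope.

Section AffineRoots.

Variable n : nat.
Variable A : 'M[int]_n.
Variable d : 'I_n -> rat.

Definition a (i j : 'I_n) : rat := (A i j)%:~R.

(* V, with coordinates in the basis of simple roots: v = sum_i [v:alpha_i] alpha_i *)
Definition vec := 'rV[rat]_n.
Definition coeff (v : vec) (i : 'I_n) : rat := v ord0 i.

Definition is_GCM : Prop :=
  (forall i, A i i = 2) /\ (forall i j, i != j -> A i j <= 0) /\
  (forall i j, A i j = 0 <-> A j i = 0).

Definition indecomposable : Prop :=
  forall S : {set 'I_n}, S != set0 -> S != setT ->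
    exists i j, [/\ i \in S, j \notin S & A i j != 0].

(* affine type (Kac, Thm 4.3 / Cor 4.3): indecomposable GCM with a
   positive vector u such that A u = 0 *)
Definition affine_type : Prop :=
  [/\ is_GCM, indecomposable &
      exists u : 'I_n -> rat, (forall i, 0 < u i) /\
                              (forall i, \sum_j a i j * u j = 0)].

Definition symmetrizing : Prop :=
  (forall i, 0 < d i) /\ (forall i j, d i * a i j = d j * a j i).

Definition simple (i : 'I_n) : vec := delta_mx ord0 i.

Definition K (u v : vec) : rat :=
  \sum_i \sum_j coeff u i * coeff v j * (d i * a i j).

Definition simple_co (i : 'I_n) : vec := (d i)^-1 *: simple i.

Definition refl (i : 'I_n) (v : vec) : vec := v - K (simple_co i) v *: simple i.

Definition act (w : seq 'I_n) (v : vec) : vec := foldr refl v w.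

Definition real_root (v : vec) : Prop := exists w i, v = act w (simple i).

Definition isint (x : rat) : Prop := exists z : int, x = z%:~R.

(* imaginary roots of affine type: the nonzero integer vectors of the radical
   (= nonzero integer multiples of delta) *)
Definition imag_root (v : vec) : Prop :=
  [/\ v != 0, forall i, isint (coeff v i) & forall i, K (simple_co i) v = 0].

Definition root (v : vec) : Prop := real_root v \/ imag_root v.

Definition positive (v : vec) : Prop := v != 0 /\ forall i, 0 <= coeff v i.

Definition pos_root (v : vec) : Prop := root v /\ positive v.

Definition is_delta (delta : vec) : Prop :=
  [/\ imag_root delta, positive delta &
      forall b, imag_root b -> positive b ->
        exists k : nat, (0 < k)%N /\ b = k%:R *: delta].

(* coordinates in the co-root basis: [v : alpha_i^vee] = d_i [v : alpha_i] *)
Definition coco (v : vec) (i : 'I_n) : rat := d i * coeff v i.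

(* imaginary roots of the dual root system (Cartan matrix A^T, simple roots
   alpha_i^vee) *)
Definition dual_imag (v : vec) : Prop :=
  [/\ v != 0, forall i, isint (coco v i) &
      forall i, \sum_j a j i * coco v j = 0].

Definition dual_positive (v : vec) : Prop := v != 0 /\ forall i, 0 <= coco v i.

Definition is_delta_dual (deltav : vec) : Prop :=
  [/\ dual_imag deltav, dual_positive deltav &
      forall b, dual_imag b -> dual_positive b ->
        exists k : nat, (0 < k)%N /\ b = k%:R *: deltav].

Definition coxeter (v : vec) : vec := act (enum 'I_n) v.
Definition coxeter_inv (v : vec) : vec := act (rev (enum 'I_n)) v.

Definition cpow (k : int) (v : vec) : vec :=
  match k with
  | Posz m => iter m coxeter v
  | Negz m => iter m.+1 coxeter_inv v
  end.

Definition plus (x : rat) : rat := Num.max x 0.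

Section WithData.

Variable aff : 'I_n.
Variable delta : vec.
Variable deltav : vec.
Variable gamma : vec.

(* co-roots: beta^vee = 2 beta / K(beta,beta) for real roots,
   (k delta)^vee = k delta^vee for imaginary roots *)
Definition coroot (b : vec) : vec :=
  if K b b != 0 then (2 / K b b) *: b
  else ((\sum_i coeff b i) / (\sum_i coeff delta i)) *: deltav.

Definition Vfin (v : vec) : Prop := coeff v aff = 0.
Definition root_fin (v : vec) : Prop := root v /\ Vfin v.

Definition Uc (v : vec) : Prop := K gamma v = 0.
Definition Upsilon (v : vec) : Prop := root v /\ Uc v.

Definition Upsilon_re (v : vec) : Prop :=
  [/\ pos_root v, real_root v, Uc v & exists k : int, root_fin (cpow k v)].

Definition Phi_c (v : vec) : Prop :=
  (exists i, v = - simple i) \/ (pos_root v /\ ~ Uc v) \/ Upsilon_re v \/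
  v = delta.

Definition compat_right (al be : vec) : rat :=
  - (\sum_i coco (coroot al) i * coeff be i)
  - \sum_(i < n) \sum_(j < n | (j < i)%N)
        a i j * plus (coco (coroot al) i) * plus (coeff be j).

Definition compat_left (al be : vec) : rat :=
  - (\sum_i coco (coroot al) i * coeff be i)
  - \sum_(i < n) \sum_(j < n | (i < j)%N)
        a i j * plus (coco (coroot al) i) * plus (coeff be j).

Definition nonneg_span (S : vec -> Prop) (x : vec) : Prop :=
  exists s : seq (rat * vec),
    (forall e, e \in s -> 0 <= e.1 /\ S e.2) /\ x = \sum_(e <- s) e.1 *: e.2.

(* Pi_c: the minimal subset of Upsilon_c cap Phi^+ whose nonnegative span
   contains Upsilon_c cap Phi^+ (= the intersection of all such subsets) *)
Definition in_Pic (p : vec) : Prop :=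
  [/\ Upsilon p, positive p &
      forall S : vec -> Prop,
        (forall x, S x -> Upsilon x /\ positive x) ->
        (forall x, Upsilon x -> positive x -> nonneg_span S x) -> S p].

(* the connected components of Pi_c (irreducible components of the
   root system formed by the real roots of Upsilon_c) *)
Inductive same_comp (p : vec) : vec -> Prop :=
| sc_refl : in_Pic p -> same_comp p p
| sc_step q r : same_comp p q -> in_Pic r -> K q r != 0 -> same_comp p r.

Definition supp (b p : vec) : Prop :=
  in_Pic p /\
  exists s : seq (rat * vec),
    [/\ forall e, e \in s -> same_comp p e.2,
        uniq (map snd s),
        b = \sum_(e <- s) e.1 *: e.2 &
        exists2 e, e \in s & e.2 = p /\ e.1 != 0].

Definition adj (al be : vec) (m : nat) : Prop :=
  exists s : seq vec,
    [/\ uniq s,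
        forall x, x \in s <->
          (supp be x /\ (supp (coxeter al) x \/ supp (coxeter_inv al) x) /\
           ~ supp al x) &
        size s = m].

Definition comp_full (al be : vec) : Prop :=
  exists p, in_Pic p /\ forall q, same_comp p q -> supp al q \/ supp be q.

Definition compat_deg (al be : vec) (m : rat) : Prop :=
  (Upsilon_re al /\ Upsilon_re be /\ comp_full al be /\
     exists k : nat, m = k%:R /\ adj al be k) \/
  (~ (Upsilon_re al /\ Upsilon_re be /\ comp_full al be) /\
     m = Num.max (compat_right al be) (compat_left al be)).

End WithData.
End AffineRoots.

From mathcomp Require Import all_boot all_order all_algebra.
From mathcomp Require Import ring lra zify.
Set Implicit Arguments. Unset Strict Implicit. Unset Printing Implicit Defensive.
Import Order.TTheory GRing.Theory Num.Theory.
Local Open Scope ring_scope.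

(** For a positive real root [alpha] the co-root coordinates of [alpha^vee]
    are nonnegative, so the truncations [[_]_+] in the two half-degrees are
    inert.  Reading [c gamma_c = gamma_c + delta] coordinate by coordinate
    along [c = s_1 ... s_n] expresses [(A gamma_c)_k] through the entries
    [[delta : alpha_j]] with [j > k]; combined with [A delta = 0] this turns
    [(alpha || delta)^<-] and [(alpha || delta)^->] into [K(alpha^vee, gamma_c)]
    and its opposite.  Hence [(alpha || delta)_c = |K(alpha^vee, gamma_c)|],
    which vanishes exactly when [alpha] lies in [U_c].  For [alpha = -alpha_i]
    the half-degree [(alpha || delta)^->] equals [[delta : alpha_i]], which is
    positive because [A] is indecomposable.  Since [delta] is not real, the
    tube case of the definition of [(_ || _)_c] never applies. *)

Section CartanForm.

Variables (n : nat) (A : 'M[int]_n) (d : 'I_n -> rat).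
Hypothesis symA : symmetrizing A d.
Hypothesis cartan_diag : forall i, A i i = 2.

Local Notation vec := (vec n).
Local Notation K := (K A d).
Local Notation refl := (refl A d).
Local Notation act := (act A d).

Definition cartan_coord (v : vec) (i : 'I_n) : rat := \sum_j a A i j * coeff v j.

Lemma coeffD (u v : vec) i : coeff (u + v) i = coeff u i + coeff v i.
Proof. by rewrite /coeff mxE. Qed.

Lemma coeffN (u : vec) i : coeff (- u) i = - coeff u i.
Proof. by rewrite /coeff mxE. Qed.

Lemma coeffZ k (u : vec) i : coeff (k *: u) i = k * coeff u i.
Proof. by rewrite /coeff mxE. Qed.

Lemma coeff_simple (i j : 'I_n) : coeff (simple i) j = (i == j)%:R.
Proof. by rewrite /coeff /simple mxE eqxx eq_sym. Qed.

Lemma cartan_coord_simple i : cartan_coord (simple i) i = 2.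
Proof.
rewrite /cartan_coord (bigD1 i) //= coeff_simple eqxx mulr1 /a cartan_diag.
by rewrite big1 ?addr0 // => j /negbTE ji; rewrite coeff_simple eq_sym ji mulr0.
Qed.

Lemma d_gt0 i : 0 < d i. Proof. exact: symA.1. Qed.

Lemma d_neq0 i : d i != 0. Proof. by rewrite gt_eqF ?d_gt0. Qed.

Lemma KE (u v : vec) : K u v = \sum_i coeff u i * d i * cartan_coord v i.
Proof.
apply: eq_bigr => i _; rewrite /cartan_coord mulr_sumr.
by apply: eq_bigr => j _; ring.
Qed.

Lemma KC (u v : vec) : K u v = K v u.
Proof.
rewrite /K exchange_big; apply: eq_bigr => i _; apply: eq_bigr => j _.
by rewrite symA.2; ring.
Qed.

Lemma KDl (u v w : vec) : K (u + v) w = K u w + K v w.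
Proof. by rewrite !KE -big_split; apply: eq_bigr => i _ /=; rewrite coeffD; ring. Qed.

Lemma KZl k (u w : vec) : K (k *: u) w = k * K u w.
Proof. by rewrite !KE mulr_sumr; apply: eq_bigr => i _; rewrite coeffZ; ring. Qed.

Lemma KNl (u w : vec) : K (- u) w = - K u w.
Proof. by rewrite -scaleN1r KZl mulN1r. Qed.

Lemma K_simple (i : 'I_n) (v : vec) : K (simple i) v = d i * cartan_coord v i.
Proof.
rewrite KE (bigD1 i) //= coeff_simple eqxx mul1r big1 ?addr0 //.
by move=> j /negbTE ji; rewrite coeff_simple eq_sym ji !mul0r.
Qed.

Lemma K_simple_co i (v : vec) : K (simple_co d i) v = cartan_coord v i.
Proof. by rewrite KZl K_simple mulKf ?d_neq0. Qed.

Lemma K_reflr i (u v : vec) :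
  K u (refl i v) = K u v - K (simple_co d i) v * K u (simple i).
Proof. by rewrite /refl !(KC u) KDl KNl KZl. Qed.

Lemma K_refll i (u w : vec) :
  K (refl i u) w = K u w - K (simple_co d i) u * K (simple i) w.
Proof. by rewrite KC K_reflr !(KC w). Qed.

Lemma K_refl i (u v : vec) : K (refl i u) (refl i v) = K u v.
Proof.
rewrite K_refll !K_reflr (KC u (simple i)) !K_simple !K_simple_co cartan_coord_simple.
by ring.
Qed.

Lemma K_act (w : seq 'I_n) (u v : vec) : K (act w u) (act w v) = K u v.
Proof. by elim: w => //= i w IH; rewrite K_refl. Qed.

Lemma real_root_K_gt0 (v : vec) : real_root A d v -> 0 < K v v.
Proof.
by case=> w [i ->]; rewrite K_act K_simple cartan_coord_simple mulr_gt0 ?d_gt0.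
Qed.

Lemma imag_root_Kr (u v : vec) : imag_root A d v -> K u v = 0.
Proof.
case=> _ _ Av0; rewrite KE big1 // => i _.
by rewrite -K_simple_co Av0 mulr0.
Qed.

Lemma real_root_not_imag (v : vec) : real_root A d v -> ~ imag_root A d v.
Proof. by move=> /real_root_K_gt0 + /(imag_root_Kr v) Kvv0; rewrite Kvv0 ltxx. Qed.

Lemma cartan_coord_split (v : vec) i :
  cartan_coord v i = \sum_(j : 'I_n | (j < i)%N) a A i j * coeff v j + 2 * coeff v i
                     + \sum_(j : 'I_n | (i < j)%N) a A i j * coeff v j.
Proof.
rewrite /cartan_coord (bigD1 i) //= /a cartan_diag (bigID (fun j : 'I_n => (j < i)%N)) /=.
have filter_lt (j : 'I_n) : (j != i) && (j < i)%N = (j < i)%N.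
  by rewrite -val_eqE /=; case: ltngtP.
have filter_gt (j : 'I_n) : (j != i) && ~~ (j < i)%N = (i < j)%N.
  by rewrite -val_eqE /=; case: ltngtP.
rewrite (eq_bigl _ _ filter_lt) (eq_bigl _ _ filter_gt) -[2%:~R]/(2 : rat).
by ring.
Qed.

Lemma coeff_refl i (v : vec) j :
  coeff (refl i v) j = coeff v j - cartan_coord v i * (i == j)%:R.
Proof. by rewrite coeffD coeffN coeffZ coeff_simple K_simple_co. Qed.

Lemma coeff_act_notin (w : seq 'I_n) (v : vec) j :
  j \notin w -> coeff (act w v) j = coeff v j.
Proof.
elim: w => //= i w IH; rewrite in_cons negb_or => /andP [ji jw].
by rewrite coeff_refl eq_sym (negbTE ji) mulr0 subr0 IH.
Qed.

Lemma act_cat (w1 w2 : seq 'I_n) (v : vec) : act (w1 ++ w2) v = act w1 (act w2 v).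
Proof. exact: foldr_cat. Qed.

Lemma mem_take_enum_ord k (j : 'I_n) : (j \in take k (enum 'I_n)) = (j < k)%N.
Proof.
rewrite -(mem_map val_inj) map_take val_enum_ord take_iota mem_iota /=.
by rewrite add0n leq_min ltn_ord andbT.
Qed.

Lemma mem_drop_enum_ord k (j : 'I_n) : (j \in drop k (enum 'I_n)) = (k <= j)%N.
Proof.
rewrite -(mem_map val_inj) map_drop val_enum_ord drop_iota mem_iota /= add0n.
by case: j => j /= jn; apply/idP/idP => [/andP [] | kj] //; apply/andP; split => //; lia.
Qed.

Lemma enum_ord_split (k : 'I_n) :
  enum 'I_n = take k (enum 'I_n) ++ k :: drop k.+1 (enum 'I_n).
Proof.
by rewrite -{1}(cat_take_drop k (enum 'I_n)) (drop_nth k) ?size_enum_ord ?nth_ord_enum.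
Qed.

(* Only [s_k] changes the [k]-th coordinate, and when it acts on
   [s_(k+1) ... s_n gamma] the coordinates [j > k] already agree with
   [c gamma = gamma + delta] while the others still agree with [gamma]. *)
Lemma cartan_coord_coxeter_shift (delta gamma : vec) k :
  coxeter A d gamma = gamma + delta ->
  cartan_coord gamma k
  = - coeff delta k - \sum_(j : 'I_n | (k < j)%N) a A k j * coeff delta j.
Proof.
move=> coxE; set g := act (drop k.+1 (enum 'I_n)) gamma.
have coeff_cox (j : 'I_n) :
    (k <= j)%N -> coeff (coxeter A d gamma) j = coeff (refl k g) j.
  move=> kj; rewrite /coxeter {1}(enum_ord_split k) act_cat /=.
  by rewrite coeff_act_notin // mem_take_enum_ord -leqNgt.
have coeff_g (j : 'I_n) : coeff g j = coeff gamma j + (k < j)%N%:R * coeff delta j.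
  case: ltnP => [kj | jk]; last first.
    by rewrite mul0r addr0 coeff_act_notin // mem_drop_enum_ord -ltnNge ltnS.
  have k_neq_j : (k == j) = false by apply: negbTE; rewrite neq_ltn kj.
  by rewrite mul1r -coeffD -coxE (coeff_cox _ (ltnW kj)) coeff_refl k_neq_j mulr0 subr0.
have g_k : cartan_coord g k = - coeff delta k.
  have := coeff_cox k (leqnn k).
  by rewrite coxE coeffD coeff_refl eqxx coeff_g ltnn mul0r addr0 mulr1; lra.
have : cartan_coord g k
       = cartan_coord gamma k + \sum_(j : 'I_n | (k < j)%N) a A k j * coeff delta j.
  rewrite /cartan_coord [X in _ + X]big_mkcond -big_split; apply: eq_bigr => j _ /=.
  by rewrite coeff_g; case: (k < j)%N; rewrite /= ?mul0r ?mul1r ?mulr0 ?addr0; ring.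
by rewrite g_k; lra.
Qed.

Lemma imag_root_coeff_gt0 (delta : vec) :
  (forall i j, i != j -> A i j <= 0) -> indecomposable A ->
  imag_root A d delta -> positive delta -> forall i, 0 < coeff delta i.
Proof.
move=> offA indA delta_imag [delta_neq0 delta_ge0] i0.
rewrite lt0r delta_ge0 andbT; apply/negP => /eqP delta_i0.
pose S := [set j | coeff delta j == 0].
have S_neq0 : S != set0 by apply/set0Pn; exists i0; rewrite inE delta_i0.
have S_neqT : S != setT.
  apply: contra delta_neq0 => /eqP ST; apply/eqP/rowP => j; rewrite mxE.
  by have := in_setT j; rewrite -ST inE => /eqP.
have [i [j [+ + Aij_neq0]]] := indA S S_neq0 S_neqT.
rewrite !inE => /eqP delta_i delta_j.
have j_neq_i : j != i by apply: contraNneq delta_j => ->; rewrite delta_i.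
have terms_ge0 k : k != i -> 0 <= - (a A i k * coeff delta k).
  move=> ki; rewrite oppr_ge0 mulr_le0_ge0 //.
  by rewrite /a lerz0 offA // eq_sym.
have terms_sum0 : \sum_(k | k != i) - (a A i k * coeff delta k) = 0.
  have := imag_root_Kr (simple_co d i) delta_imag.
  rewrite K_simple_co /cartan_coord (bigD1 i) //= delta_i mulr0 add0r sumrN => ->.
  by rewrite oppr0.
move/eqP: (psumr_eq0P terms_ge0 terms_sum0 j_neq_i); rewrite oppr_eq0 mulf_eq0.
by rewrite /a intr_eq0 (negbTE Aij_neq0) (negbTE delta_j).
Qed.

Lemma plus_id_ge0 x : 0 <= x -> plus x = x.
Proof. exact: max_l. Qed.

Lemma plus_le0 x : x <= 0 -> plus x = 0.
Proof. exact: max_r. Qed.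

Lemma coroot_real (delta deltav v : vec) :
  real_root A d v -> coroot A d delta deltav v = (2 / K v v) *: v.
Proof. by move=> /real_root_K_gt0 Kvv_gt0; rewrite /coroot gt_eqF. Qed.

Lemma coroot_neg_simple (delta deltav : vec) i :
  coroot A d delta deltav (- simple i) = - simple_co d i.
Proof.
have K_neg_simple : K (- simple i) (- simple i) = d i * 2.
  by rewrite KNl KC KNl opprK K_simple cartan_coord_simple.
rewrite /coroot K_neg_simple mulf_neq0 ?d_neq0 // scalerN; congr (- _).
by rewrite /simple_co; congr (_ *: _); field; rewrite d_neq0.
Qed.

Lemma coco_neg_simple_co i j : coco d (- simple_co d i) j = - (i == j)%:R.
Proof.
rewrite /coco coeffN coeffZ coeff_simple.
case: eqP => [<-|_]; last by rewrite !(mulr0, oppr0).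
by rewrite mulr1 mulrN mulfV ?d_neq0.
Qed.

Lemma cartan_row_sum_scale (P : pred 'I_n) (v : vec) c i :
  \sum_(j | P j) a A i j * c * coeff v j = c * \sum_(j | P j) a A i j * coeff v j.
Proof. by rewrite mulr_sumr; apply: eq_bigr => j _; ring. Qed.

Section HalfDegreesWithDelta.

Variables (delta deltav gamma : vec).
Hypothesis delta_imag : imag_root A d delta.
Hypothesis delta_pos : positive delta.
Hypothesis coxE : coxeter A d gamma = gamma + delta.

Local Notation coroot := (coroot A d delta deltav).
Local Notation max_half_degrees v :=
  (Num.max (compat_right A d delta deltav v delta)
           (compat_left A d delta deltav v delta)).

Lemma compat_left_delta (v : vec) :
  (forall i, 0 <= coco d (coroot v) i) ->
  compat_left A d delta deltav v delta = K (coroot v) gamma.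
Proof.
move=> coco_ge0; rewrite /compat_left -sumrN -sumrB KE; apply: eq_bigr => i _.
rewrite plus_id_ge0 //.
under eq_bigr => j _ do rewrite [plus (coeff _ j)]plus_id_ge0 ?delta_pos.2 //.
by rewrite cartan_row_sum_scale (cartan_coord_coxeter_shift i coxE) /coco; ring.
Qed.

Lemma compat_right_delta (v : vec) :
  (forall i, 0 <= coco d (coroot v) i) ->
  compat_right A d delta deltav v delta = - K (coroot v) gamma.
Proof.
move=> coco_ge0; rewrite /compat_right -sumrN -sumrB KE -sumrN; apply: eq_bigr => i _.
rewrite plus_id_ge0 //.
under eq_bigr => j _ do rewrite [plus (coeff _ j)]plus_id_ge0 ?delta_pos.2 //.
have := imag_root_Kr (simple_co d i) delta_imag.
rewrite K_simple_co cartan_coord_split => delta_row.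
rewrite !cartan_row_sum_scale (cartan_coord_coxeter_shift i coxE) /coco.
move: delta_row; set L := \sum_(j | _) _; set U := \sum_(j | _) _ => delta_row.
have -> : L = - 2 * coeff delta i - U by lra.
by ring.
Qed.

Lemma compat_right_neg_simple i :
  compat_right A d delta deltav (- simple i) delta = coeff delta i.
Proof.
rewrite /compat_right coroot_neg_simple.
rewrite [X in _ - X]big1 => [|k _]; last first.
  by apply: big1 => j _; rewrite coco_neg_simple_co plus_le0 ?mulr0 ?mul0r // oppr_le0.
rewrite subr0 (bigD1 i) //= big1 => [|j j_neq_i]; last first.
  by rewrite coco_neg_simple_co eq_sym (negbTE j_neq_i) oppr0 mul0r.
by rewrite coco_neg_simple_co eqxx mulN1r addr0 opprK.
Qed.

Lemma compat_deg_delta aff (v : vec) m :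
  compat_deg A d aff delta deltav gamma v delta m <->
  m = max_half_degrees v.
Proof.
have delta_notUre : ~ Upsilon_re A d aff gamma delta.
  by case=> _ /real_root_not_imag.
split => [[[_ []] // | [_ ->] //] | ->].
by right; split => // [[_ []]].
Qed.

Lemma coco_coroot_ge0 (v : vec) :
  real_root A d v -> positive v -> forall i, 0 <= coco d (coroot v) i.
Proof.
move=> v_real [_ v_ge0] i; rewrite coroot_real // /coco coeffZ.
have Kvv_gt0 := real_root_K_gt0 v_real.
apply: mulr_ge0; first exact: ltW (d_gt0 i).
by apply: mulr_ge0 => //; apply: mulr_ge0 => //; rewrite invr_ge0 ltW.
Qed.

Lemma compat_delta_real (v : vec) : real_root A d v -> positive v ->
  max_half_degrees v = `|K (coroot v) gamma|.
Proof.
move=> v_real v_pos; have coco_ge0 := coco_coroot_ge0 v_real v_pos.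
by rewrite compat_right_delta // compat_left_delta // maxNr.
Qed.

Lemma K_coroot_eq0 (v : vec) :
  real_root A d v -> (K (coroot v) gamma == 0) = (K gamma v == 0).
Proof.
move=> v_real; rewrite coroot_real // KZl KC mulf_eq0 mulf_eq0 invr_eq0.
by rewrite pnatr_eq0 (gt_eqF (real_root_K_gt0 v_real)).
Qed.

Lemma compat_delta_eq0_real (v : vec) : real_root A d v -> positive v ->
  0 = max_half_degrees v <-> Uc A d gamma v.
Proof.
move=> v_real v_pos; rewrite compat_delta_real // /Uc.
split => [norm0 | Kv0].
- by apply/eqP; rewrite -K_coroot_eq0 // -normr_eq0 -norm0.
- by apply/esym/eqP; rewrite normr_eq0 K_coroot_eq0 // Kv0.
Qed.

End HalfDegreesWithDelta.

Lemma pos_root_notUc_real (gamma v : vec) :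
  pos_root A d v -> ~ Uc A d gamma v -> real_root A d v.
Proof. by case=> [[] // v_imag _ []]; apply: imag_root_Kr. Qed.

End CartanForm.

Theorem proposition5p6 (n : nat) (A : 'M[int]_n) (d : 'I_n -> rat)
    (aff : 'I_n) (delta deltav gamma : 'rV[rat]_n) :
  affine_type A -> symmetrizing A d ->
  is_delta A d delta -> is_delta_dual A d deltav ->
  coeff delta aff = 1 ->
  coeff gamma aff = 0 -> coxeter A d gamma = gamma + delta ->
  forall alpha : 'rV[rat]_n,
    Phi_c A d aff delta gamma alpha -> alpha != delta ->
    (compat_deg A d aff delta deltav gamma alpha delta 0 <->
     Upsilon_re A d aff gamma alpha).
Proof.
move=> [[diagA [offA _]] indA _] symA [delta_imag delta_pos _] _ _ _ coxE.
move=> alpha Phi_alpha alpha_neq_delta.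
rewrite (compat_deg_delta symA diagA deltav gamma delta_imag).
have eq0_real := compat_delta_eq0_real symA diagA deltav delta_imag delta_pos coxE.
case: Phi_alpha => [[i ->] | [[alpha_pos alpha_notU] | [Ure_alpha | alpha_delta]]].
- split=> [max0 | [[_ [_ /(_ i)]]]]; last first.
    by rewrite coeffN coeff_simple eqxx oppr_ge0 ler10.
  have := imag_root_coeff_gt0 symA offA indA delta_imag delta_pos i.
  rewrite -(compat_right_neg_simple symA diagA delta deltav) ltNge.
  by rewrite max0 le_max lexx.
- have alpha_real := pos_root_notUc_real symA alpha_pos alpha_notU.
  rewrite eq0_real //; last exact: alpha_pos.2.
  by split=> // [[_ _ /alpha_notU]].
- have [[_ alpha_pos] alpha_real alpha_U _] := Ure_alpha.
  by rewrite eq0_real.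
- by rewrite alpha_delta eqxx in alpha_neq_delta.
Qed.
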